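(* Let $p$ be a prime, $n\in\mathbb{N}$, $G$ a group with $|G|=p^n$, $f\in\mathrm{Aut}(G)$, and suppose $Q=\mathcal{Q}(G,f)$ is a connected quandle. The following are equivalent: (i) $Q$ is simply connected; (ii) $H^2(Q,\mathbb{Z}_p)=\{\mathbf{1}\}$, i.e. every quandle cocycle $\theta:Q\times Q\to\mathbb{Z}_p$ is cohomologous to the trivial cocycle; (iii) $Q$ has no connected cover of size $p^{n+1}$.
   Context: A quandle is a set $Q$ with a binary operation $*$ such that every left translation $L_x:y\mapsto x*y$ is a bijection, $x*(y*z)=(x*y)*(x*z)$ and $x*x=x$. $\mathrm{LMlt}(Q)=\langle L_x:x\in Q\rangle$; $Q$ is connected if $\mathrm{LMlt}(Q)$ is transitive on $Q$. For a group $G$ and $f\in\mathrm{Aut}(G)$, $\mathcal{Q}(G,f)$ is the quandle on $G$ with $x*y=xf(x^{-1}y)$. For a group $K$, a quandle cocycle with values in $K$ is $\theta:Q\times Q\to K$ with $\theta_{x*y,x*z}\theta_{x,z}=\theta_{x,y*z}\theta_{y,z}$ and $\theta_{x,x}=1$; $\theta,\theta'$ are cohomologous if $\theta'_{x,y}=\gamma_{x*y}\theta_{x,y}\gamma_y^{-1}$ for some $\gamma:Q\to K$; the trivial cocycle is constantly $1$. Cocycles with values in $\mathrm{Sym}_S$ ($S$ a set) are defined likewise. A cover of $Q$ is a quandle $E$ with a surjective homomorphism $\pi:E\to Q$ such that $\pi(u)=\pi(v)$ implies $L_u=L_v$ in $E$; it is connected if $E$ is connected, and its size is $|E|$. $Q$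 is simply connected if it is connected and for every set $S$ every quandle cocycle with values in $\mathrm{Sym}_S$ is cohomologous to the trivial one. *)

From HB Require Import structures.
From mathcomp Require Import all_boot all_order all_algebra all_fingroup.
Set Implicit Arguments. Unset Strict Implicit. Unset Printing Implicit Defensive.
Import GRing.Theory.

(* A quandle structure on a type T, given by the binary operation op
   (op x y = x * y); L_x = op x. *)
Definition is_quandle (T : Type) (op : T -> T -> T) : Prop :=
  [/\ (forall x, bijective (op x)),
      (forall x y z, op x (op y z) = op (op x y) (op x z)) &
      (forall x, op x x = x)].

(* lmlt_orb op a b : b = g a for some g in LMlt = <L_x : x in T>, i.e. g is
   a word in the L_x and their inverses. *)
Inductive lmlt_orb (T : Type) (op : T -> T -> T) (a : T) : T -> Prop :=
  | lmlt_refl : lmlt_orb op a a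
  | lmlt_fwd b x : lmlt_orb op a b -> lmlt_orb op a (op x b)
  | lmlt_bwd b x c : lmlt_orb op a b -> op x c = b -> lmlt_orb op a c.

Definition qconnected (T : Type) (op : T -> T -> T) : Prop :=
  forall a b, lmlt_orb op a b.

(* Quandle cocycle with values in Sym_S (bijections of S, product =
   composition). *)
Definition sym_cocycle (T S : Type) (op : T -> T -> T) (th : T -> T -> S -> S)
  : Prop :=
  [/\ (forall x y, bijective (th x y)),
      (forall x y z, th (op x y) (op x z) \o th x z =1 th x (op y z) \o th y z) &
      (forall x, th x x =1 id)].

(* th is cohomologous to the trivial cocycle:
   th_{x,y} = gamma_{x*y} * 1 * gamma_y^{-1}. *)
Definition sym_cohom_trivial (T S : Type) (op : T -> T -> T)
  (th : T -> T -> S -> S) : Prop :=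
  exists gamma : T -> S -> S,
    (forall y, bijective (gamma y)) /\
    (forall x y, th x y \o gamma y =1 gamma (op x y)).

Definition simply_connected (T : Type) (op : T -> T -> T) : Prop :=
  qconnected op /\
  forall (S : Type) (th : T -> T -> S -> S),
    sym_cocycle op th -> sym_cohom_trivial op th.

Definition ab_cocycle (T : Type) (K : zmodType) (op : T -> T -> T)
  (th : T -> T -> K) : Prop :=
  (forall x y z, (th (op x y) (op x z) + th x z = th x (op y z) + th y z)%R) /\
  (forall x, th x x = 0%R).

Definition ab_cohom_trivial (T : Type) (K : zmodType) (op : T -> T -> T)
  (th : T -> T -> K) : Prop :=
  exists gamma : T -> K, forall x y, th x y = (gamma (op x y) - gamma y)%R.

Definition is_cover (E Q : Type) (opE : E -> E -> E) (op : Q -> Q -> Q)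
  (pi : E -> Q) : Prop :=
  [/\ is_quandle opE,
      (forall q, exists u, pi u = q),
      (forall u v, pi (opE u v) = op (pi u) (pi v)) &
      (forall u v, pi u = pi v -> opE u =1 opE v)].

Definition QGf (gT : finGroupType) (f : gT -> gT) (x y : gT) : gT :=
  (x * f (x^-1 * y))%g.

From HB Require Import structures.
From mathcomp Require Import all_boot all_order all_algebra all_fingroup.
From mathcomp Require Import cyclic boolp.
Set Implicit Arguments. Unset Strict Implicit. Unset Printing Implicit Defensive.
Import GRing.Theory.

(** The conditions are linked through extensions of Q by cocycles.  A Z_p-valued
   cocycle [th] is the Sym(Z_p)-valued cocycle [s |-> s + th x y], so (i) gives (ii).  If
   [th] is not a coboundary, the extension Q x_th Z_p is a connected cover of size p^(n+1),
   so (iii) gives (ii).  A trivialisation of the cocycle describing transport in a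
   connected cover E is a section of E over Q with LMlt-stable image, so (i) forces
   |E| <= |Q| = p^n.

   The substance is (ii) => (i).  Given a Sym_S-valued cocycle, consider the extension
   Q x S and the orbit C of a point (1, s0).  A word in the L_x^(+-1) acting trivially on Q
   acts on C commuting with every L_x, and since any word acts on Q(G,f) as
   [y |-> h * f^k y], every loop at 1 can be completed to such a trivial word.  Hence the
   fibre N of C over 1 is an abelian group acting simply transitively on each fibre of C,
   and coordinates with respect to a fixed section define an N-valued cocycle [nu] whose
   values generate N.  Averaging [nu] over left translations of G gives a cocycle
   [psi (x^-1 * y)] with [psi : G -> N] a homomorphism, whence |G|^2 N = 0.  By (ii), for
   every character [chi : N -> Z_p] the cocycle [chi \o nu] is a coboundary, which forces
   [chi = 0]; a finitely generated abelian p-group without non-zero Z_p-characters is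
   trivial.  So loops at 1 fix (1, s0), and transport along fixed paths from 1 trivialises
   the cocycle. *)

(** * Words in the left translations *)

Section Words.
Variables (I T : Type) (L Li : I -> T -> T).

Definition wact (w : seq (I * bool)) (t : T) : T :=
  foldr (fun l t => if l.2 then L l.1 t else Li l.1 t) t w.

Definition winv (w : seq (I * bool)) : seq (I * bool) :=
  rev [seq (l.1, ~~ l.2) | l <- w].

Lemma wact_cat w1 w2 t : wact (w1 ++ w2) t = wact w1 (wact w2 t).
Proof. by rewrite /wact foldr_cat. Qed.

Lemma wact_nseqV i k t : Li i t = t -> wact (nseq k (i, false)) t = t.
Proof. by move=> Lit; elim: k => //= k ->. Qed.

Hypotheses (LK : forall i, cancel (L i) (Li i)) (LiK : forall i, cancel (Li i) (L i)).

Lemma wactK w : cancel (wact w) (wact (winv w)).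
Proof.
elim: w => [|[i b] w IH] t //=.
by rewrite /winv map_cons rev_cons -cats1 wact_cat /=; case: b; rewrite ?LK ?LiK IH.
Qed.

Lemma wactVK w : cancel (wact (winv w)) (wact w).
Proof.
elim: w => [|[i b] w IH] t //=.
by rewrite /winv map_cons rev_cons -cats1 wact_cat /=; case: b; rewrite IH ?LK ?LiK.
Qed.

Lemma wact_inj w : injective (wact w).
Proof. exact: can_inj (wactK w). Qed.

End Words.

Lemma wact_morph (I T T' : Type) (L Li : I -> T -> T) (L' Li' : I -> T' -> T')
    (pi : T -> T') :
  (forall i, cancel (Li i) (L i)) -> (forall i, cancel (L' i) (Li' i)) ->
  (forall i t, pi (L i t) = L' i (pi t)) ->
  forall w t, pi (wact L Li w t) = wact L' Li' w (pi t).
Proof.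
move=> LiK L'K piL w t; elim: w => [|[i []] w IH] //=; rewrite -IH ?piL //.
by rewrite -[in RHS](LiK i (wact L Li w t)) piL L'K.
Qed.

Section WordsOrbit.
Variables (T : Type) (op opi : T -> T -> T).

Lemma lmlt_orb_wact a b :
  (forall x, cancel (op x) (opi x)) -> lmlt_orb op a b -> exists w, wact op opi w a = b.
Proof.
move=> opK; elim=> [|b' x _ [w <-]|b' x c _ [w wb] opc].
- by exists [::].
- by exists ((x, true) :: w).
- by exists ((x, false) :: w); rewrite /= wb -opc opK.
Qed.

Lemma wact_lmlt_orb (I : Type) (m : I -> T) (Li : I -> T -> T) w a :
  (forall i, cancel (Li i) (op (m i))) -> lmlt_orb op a (wact (op \o m) Li w a).
Proof.
move=> LiK; elim: w => [|[i []] w IH] /=; first exact: lmlt_refl.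
- exact: lmlt_fwd.
- by apply: (lmlt_bwd (x := m i) IH); rewrite LiK.
Qed.

Lemma qconnected_of_wact (I : Type) (m : I -> T) (Li : I -> T -> T) a :
  (forall i, cancel (op (m i)) (Li i)) -> (forall i, cancel (Li i) (op (m i))) ->
  (forall b, exists w, wact (op \o m) Li w a = b) -> qconnected op.
Proof.
move=> LK LiK reach u v; have [[wu <-] [wv <-]] := (reach u, reach v).
have -> : wact (op \o m) Li wv a = wact (op \o m) Li (wv ++ winv wu) (wact (op \o m) Li wu a).
  by rewrite wact_cat wactK.
exact: wact_lmlt_orb.
Qed.

End WordsOrbit.

Lemma bijective_inv (A B : Type) (g : A -> B) :
  bijective g -> {h | cancel g h & cancel h g}.
Proof. by move=> gB; apply: cid2; case: gB => h; exists h. Qed.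

Section Paths.
Variables (T : Type) (op opi : T -> T -> T).
Hypotheses (opK : forall x, cancel (op x) (opi x)) (opiK : forall x, cancel (opi x) (op x)).
Hypothesis connT : qconnected op.
Variable b0 : T.
Local Notation qact := (wact op opi).

Definition path_to (y : T) : seq (T * bool) :=
  sval (cid (lmlt_orb_wact opK (connT b0 y))).

Lemma path_toP y : qact (path_to y) b0 = y.
Proof. exact: svalP (cid (lmlt_orb_wact opK (connT b0 y))). Qed.

Lemma path_toVP y : qact (winv (path_to y)) y = b0.
Proof. by rewrite -[X in qact _ X](path_toP y) (wactK opK opiK). Qed.

End Paths.

(** * Extensions by cocycles *)

Section Extension.
Variables (T S : Type) (op opi : T -> T -> T) (bt : T -> T -> S -> S).
Hypotheses (quandleT : is_quandle op) (opK : forall x, cancel (op x) (opi x))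
  (opiK : forall x, cancel (opi x) (op x)) (cocycle_bt : sym_cocycle op bt).
Local Notation qact := (wact op opi).

Let bt_bij x y : bijective (bt x y). Proof. by case: cocycle_bt. Qed.

Definition btV x y : S -> S := s2val (bijective_inv (bt_bij x y)).

Lemma btK x y : cancel (bt x y) (btV x y).
Proof. by rewrite /btV; case: bijective_inv. Qed.

Lemma btVK x y : cancel (btV x y) (bt x y).
Proof. by rewrite /btV; case: bijective_inv. Qed.

Definition ext_act (x : T) (e : T * S) : T * S := (op x e.1, bt x e.1 e.2).
Definition ext_actV (x : T) (e : T * S) : T * S := (opi x e.1, btV x (opi x e.1) e.2).
Definition ext_op (u : T * S) : T * S -> T * S := ext_act u.1.
Local Notation eact := (wact ext_act ext_actV).

Lemma ext_actK x : cancel (ext_act x) (ext_actV x).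
Proof. by case=> y s; rewrite /ext_act /ext_actV /= opK btK. Qed.

Lemma ext_actVK x : cancel (ext_actV x) (ext_act x).
Proof. by case=> y s; rewrite /ext_act /ext_actV /= opiK btVK. Qed.

Lemma ext_act_dist x y e : ext_act x (ext_act y e) = ext_act (op x y) (ext_act x e).
Proof.
case: quandleT cocycle_bt => _ dist _ [_ coc _]; case: e => z s.
by rewrite /ext_act /= dist; congr pair; apply: esym; exact: coc.
Qed.

Lemma ext_act_idem x s : ext_act x (x, s) = (x, s).
Proof.
by case: quandleT cocycle_bt => _ _ idem [_ _ id1]; rewrite /ext_act /= idem [bt x x s]id1.
Qed.

Lemma ext_op_quandle : is_quandle ext_op.
Proof.
split=> [u|u v e|[x s]]; rewrite /ext_op.
- by exists (ext_actV u.1); [apply: ext_actK | apply: ext_actVK].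
- exact: ext_act_dist.
- exact: ext_act_idem.
Qed.

Lemma ext_op_cover : inhabited S -> is_cover ext_op op fst.
Proof.
case=> s; split=> [||//|[x ?] [y ?] /= -> //]; first exact: ext_op_quandle.
by move=> x; exists (x, s).
Qed.

Lemma eact_fst w e : (eact w e).1 = qact w e.1.
Proof. exact: (wact_morph (pi := fst) ext_actVK opK). Qed.

Lemma ext_actV_act z x e : ext_actV z (ext_act x e) = ext_act (opi z x) (ext_actV z e).
Proof. by apply: (can_inj (ext_actK z)); rewrite ext_actVK ext_act_dist opiK ext_actVK. Qed.

Lemma eact_ext_act w x e : eact w (ext_act x e) = ext_act (qact w x) (eact w e).
Proof.
elim: w => [|[z []] w IH] //=; rewrite IH; first exact: ext_act_dist.
exact: ext_actV_act.
Qed.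

Lemma eact_ext_actV w x e : eact w (ext_actV x e) = ext_actV (qact w x) (eact w e).
Proof.
by apply: (can_inj (ext_actK (qact w x))); rewrite ext_actVK -eact_ext_act ext_actVK.
Qed.

Definition trivial_word (w : seq (T * bool)) := forall y, qact w y = y.

Lemma trivial_word_comm w h e :
  trivial_word w -> eact w (eact h e) = eact h (eact w e).
Proof.
move=> triv_w; elim: h => [|[z []] h IH] //=.
- by rewrite eact_ext_act triv_w IH.
- by rewrite eact_ext_actV triv_w IH.
Qed.

Lemma trivial_word_cat w1 w2 :
  trivial_word w1 -> trivial_word w2 -> trivial_word (w1 ++ w2).
Proof. by move=> triv1 triv2 y; rewrite wact_cat triv2 triv1. Qed.

Lemma trivial_word_inv w : trivial_word w -> trivial_word (winv w).
Proof. by move=> triv_w y; rewrite -{1}(triv_w y) wactK. Qed.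

Hypothesis connT : qconnected op.
Variable b0 : T.
Local Notation path_to := (path_to opK connT b0).

Lemma sym_cohom_trivial_of_monodromy :
  (forall w s, qact w b0 = b0 -> eact w (b0, s) = (b0, s)) -> sym_cohom_trivial op bt.
Proof.
move=> loop_fix; pose gam y s := (eact (path_to y) (b0, s)).2.
have eact_path y s : eact (path_to y) (b0, s) = (y, gam y s).
  by rewrite [LHS]surjective_pairing eact_fst path_toP.
exists gam; split=> [y|x y s /=].
- exists (fun t => (eact (winv (path_to y)) (y, t)).2) => [s|t].
    by rewrite /= -eact_path (wactK ext_actK ext_actVK).
  have back : eact (winv (path_to y)) (y, t) = (b0, (eact (winv (path_to y)) (y, t)).2).
    by rewrite [LHS]surjective_pairing eact_fst path_toVP.
  by rewrite /gam -back (wactVK ext_actK ext_actVK).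
- pose u := winv (path_to (op x y)) ++ (x, true) :: path_to y.
  have loop_u : qact u b0 = b0 by rewrite wact_cat /= path_toP path_toVP.
  have := loop_fix u s loop_u; rewrite wact_cat /= eact_path /ext_act /=.
  by move/(congr1 (eact (path_to (op x y)))); rewrite (wactVK ext_actK ext_actVK) eact_path => -[].
Qed.

End Extension.

Definition H2_Zp_trivial (T : Type) (op : T -> T -> T) (p : nat) :=
  forall th : T -> T -> 'Z_p, ab_cocycle op th -> ab_cohom_trivial op th.

Definition has_connected_cover (T : Type) (op : T -> T -> T) (N : nat) :=
  exists (E : finType) (opE : E -> E -> E) (pi : E -> T),
    [/\ is_cover opE op pi, qconnected opE & #|E| = N].

Definition sym_of_ab (T : Type) (K : zmodType) (th : T -> T -> K) (x y : T) (s : K) : K :=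
  (s + th x y)%R.

Section AbelianCocycles.
Variables (T : Type) (K : zmodType) (op : T -> T -> T) (th : T -> T -> K).
Local Open Scope ring_scope.

Lemma sym_of_ab_cocycle : ab_cocycle op th -> sym_cocycle op (sym_of_ab th).
Proof.
case=> coc id0; split=> [x y|x y z s|x s]; rewrite /sym_of_ab /=.
- by exists (fun s => s - th x y) => s; rewrite ?addrK ?subrK.
- by rewrite -!addrA; congr (s + _); rewrite addrC coc addrC.
- by rewrite id0 addr0.
Qed.

Lemma ab_cohom_trivial_of_sym :
  sym_cohom_trivial op (sym_of_ab th) -> ab_cohom_trivial op th.
Proof.
case=> gam [_ gamP]; exists (fun y => gam y 0) => x y.
by rewrite -(gamP x y 0) /= /sym_of_ab addrAC subrr add0r.
Qed.

End AbelianCocycles.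

Section AbelianExtension.
Variables (T : Type) (K : zmodType) (op opi : T -> T -> T) (th : T -> T -> K).
Hypotheses (quandleT : is_quandle op) (opK : forall x, cancel (op x) (opi x))
  (opiK : forall x, cancel (opi x) (op x)) (cocycle_th : ab_cocycle op th).
Local Open Scope ring_scope.
Local Notation cocycle := (sym_of_ab_cocycle cocycle_th).
Local Notation eact := (wact (ext_act op (sym_of_ab th)) (ext_actV opi cocycle)).

Lemma btV_sym_of_ab x y s : btV cocycle x y s = s - th x y.
Proof. by apply: (can_inj (btK cocycle x y)); rewrite btVK /sym_of_ab subrK. Qed.

Lemma eact_sym_of_ab w y s : eact w (y, s) = (wact op opi w y, s + (eact w (y, 0)).2).
Proof.
elim: w => [|[x []] w IH] /=; first by rewrite addr0.
- by rewrite IH /ext_act /= (eact_fst opK opiK) /sym_of_ab addrA.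
- by rewrite IH /ext_actV /= (eact_fst opK opiK) !btV_sym_of_ab addrA.
Qed.

End AbelianExtension.

Lemma Zp_mulrn_onto p (a c : 'Z_p) : prime p -> a != 0%R -> exists k, c = (a *+ k)%R.
Proof.
move=> p_pr a_nz; have p_gt1 := prime_gt1 p_pr.
have a_lt_p : val a < p by rewrite -[p in _ < p](Zp_cast p_gt1) ltn_ord.
have a_unit : a \is a GRing.unit.
  rewrite -(natr_Zp a) unitZpE // prime_coprime //; apply: contra a_nz => p_dvd_a.
  by apply/eqP/val_inj; move: p_dvd_a; rewrite /dvdn modn_small // => /eqP.
by exists (val (c / a)%R); rewrite -mulr_natr natr_Zp mulrC divrK.
Qed.

(** * Covers of connected quandles *)

Section CoversOfConnectedQuandles.
Variables (T : finType) (op opi : T -> T -> T).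
Hypotheses (quandleT : is_quandle op) (opK : forall x, cancel (op x) (opi x))
  (opiK : forall x, cancel (opi x) (op x)) (connT : qconnected op).
Local Notation qact := (wact op opi).

Section ZpExtension.
Variables (p : nat) (th : T -> T -> 'Z_p).
Hypotheses (p_pr : prime p) (cocycle_th : ab_cocycle op th).
Local Notation cocycle := (sym_of_ab_cocycle cocycle_th).
Local Notation eact := (wact (ext_act op (sym_of_ab th)) (ext_actV opi cocycle)).

Lemma Zp_connected_cover : ~ ab_cohom_trivial op th -> has_connected_cover op (#|T| * p).
Proof.
move=> nontriv.
have [b0 _] : exists b0 : T, True.
  apply: contrapT => noT; apply: nontriv; exists (fun=> 0%R) => x.
  by case: noT; exists x.
have [w [loop_w a_nz]] : exists w, qact w b0 = b0 /\ (eact w (b0, 0%R)).2 != 0%R.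
  apply: contrapT => loops0; apply/nontriv/ab_cohom_trivial_of_sym.
  apply: (sym_cohom_trivial_of_monodromy opK opiK (cocycle_bt := cocycle) connT (b0 := b0)).
  move=> w s loop_w.
  rewrite eact_sym_of_ab // loop_w; congr pair.
  suff -> : (eact w (b0, 0%R)).2 = 0%R by rewrite addr0.
  by apply: contrapT => nz; apply: loops0; exists w; split=> //; apply/eqP.
set a := (eact w (b0, 0%R)).2 in a_nz.
have eact_loops k : eact (flatten (nseq k w)) (b0, 0%R) = (b0, a *+ k)%R.
  elim: k => [|k IH] /=; first by rewrite mulr0n.
  by rewrite wact_cat IH eact_sym_of_ab // loop_w mulrSr.
have reach e : exists w, eact w (b0, 0%R) = e.
  case: e => y c; pose g := (eact (path_to opK connT b0 y) (b0, 0%R)).2.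
  have [k ck] := Zp_mulrn_onto (c - g)%R p_pr a_nz.
  exists (path_to opK connT b0 y ++ flatten (nseq k w)).
  by rewrite wact_cat eact_loops eact_sym_of_ab // path_toP -ck subrK.
exists (T * 'Z_p)%type, (ext_op op (sym_of_ab th)), fst; split.
- exact: ext_op_cover quandleT opK opiK cocycle (inhabits 0%R).
- apply: (qconnected_of_wact (op := ext_op op (sym_of_ab th)) (m := fun x => (x, 0%R))
           (Li := ext_actV opi cocycle) (a := (b0, 0%R))) => [x|x|//].
  + exact: ext_actK.
  + exact: ext_actVK.
- by rewrite card_prod card_ord Zp_cast // prime_gt1.
Qed.

End ZpExtension.

Section Cover.
Variables (E : finType) (opE : E -> E -> E) (pi : E -> T).
Hypotheses (coverE : is_cover opE op pi) (connE : qconnected opE).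
Variable b0 : T.

Let quandleE : is_quandle opE. Proof. by case: coverE. Qed.
Let pi_onto x : exists u, pi u = x. Proof. by case: coverE => _ onto _ _; apply: onto. Qed.
Let pi_op u v : pi (opE u v) = op (pi u) (pi v). Proof. by case: coverE. Qed.
Let pi_fiber u v : pi u = pi v -> opE u =1 opE v.
Proof. by case: coverE => _ _ _ fib; apply: fib. Qed.
Let opE_bij u : bijective (opE u). Proof. by case: quandleE. Qed.

Definition opEV (u : E) : E -> E := s2val (bijective_inv (opE_bij u)).
Lemma opEK u : cancel (opE u) (opEV u). Proof. by rewrite /opEV; case: bijective_inv. Qed.
Lemma opEVK u : cancel (opEV u) (opE u). Proof. by rewrite /opEV; case: bijective_inv. Qed.

Definition lift (x : T) : E := sval (cid (pi_onto x)).
Lemma liftK x : pi (lift x) = x. Proof. exact: svalP (cid (pi_onto x)). Qed.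

Local Notation LE x := (opE (lift x)).
Local Notation eactE := (wact (fun x => LE x) (fun x => opEV (lift x))).

Lemma pi_eactE w e : pi (eactE w e) = qact w (pi e).
Proof. by apply: (wact_morph (fun x => opEVK (lift x)) opK) => x u; rewrite pi_op liftK. Qed.

Lemma opE_lift u : opE u =1 LE (pi u).
Proof. by apply: pi_fiber; rewrite liftK. Qed.

Lemma LE_dist x y e : LE (op x y) (LE x e) = LE x (LE y e).
Proof.
have lift_op : opE (LE x (lift y)) =1 LE (op x y).
  by move=> u; rewrite opE_lift pi_op !liftK.
by case: quandleE => _ dist _; rewrite [RHS]dist lift_op.
Qed.

Lemma LE_idem x e : pi e = x -> LE x e = e.
Proof. by case: quandleE => _ _ idem <-; rewrite -opE_lift idem. Qed.

Local Notation path := (path_to opK connT b0).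
Definition transport y := eactE (path y).
Definition transportV y := eactE (winv (path y)).

Lemma transportK y : cancel (transport y) (transportV y).
Proof. exact: wactK (fun x => opEK (lift x)) (fun x => opEVK (lift x)) _. Qed.

Lemma transportVK y : cancel (transportV y) (transport y).
Proof. exact: wactVK (fun x => opEK (lift x)) (fun x => opEVK (lift x)) _. Qed.

Lemma pi_transport y e : pi e = b0 -> pi (transport y e) = y.
Proof. by move=> e_b0; rewrite pi_eactE e_b0 path_toP. Qed.

Lemma pi_transportV y e : pi e = y -> pi (transportV y e) = b0.
Proof. by move=> e_y; rewrite pi_eactE e_y path_toVP. Qed.

Definition base_fiber := {e : E | pi e == b0}.

Lemma pi_base_fiber (s : base_fiber) : pi (val s) = b0.
Proof. exact/eqP/(valP s). Qed.

Definition fiber_cocycle x y (s : base_fiber) : base_fiber :=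
  insubd s (transportV (op x y) (LE x (transport y (val s)))).

Definition fiber_cocycleV x y (s : base_fiber) : base_fiber :=
  insubd s (transportV y (opEV (lift x) (transport (op x y) (val s)))).

Lemma fiber_cocycleE x y s :
  val (fiber_cocycle x y s) = transportV (op x y) (LE x (transport y (val s))).
Proof.
rewrite insubdK //; apply/eqP/pi_transportV.
by rewrite pi_op liftK pi_transport ?pi_base_fiber.
Qed.

Lemma fiber_cocycleVE x y s :
  val (fiber_cocycleV x y s) = transportV y (opEV (lift x) (transport (op x y) (val s))).
Proof.
rewrite insubdK //; apply/eqP/pi_transportV; apply: (can_inj (opK x)).
by rewrite -{1}(liftK x) -pi_op opEVK pi_transport ?pi_base_fiber.
Qed.

Lemma fiber_cocycle_sym : sym_cocycle op fiber_cocycle.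
Proof.
split=> [x y|x y z s|x s]; first exists (fiber_cocycleV x y) => s; apply: val_inj.
- by rewrite fiber_cocycleVE fiber_cocycleE transportVK opEK transportK.
- by rewrite fiber_cocycleE fiber_cocycleVE transportVK opEVK transportK.
- by case: quandleT => _ distT _; rewrite /= !fiber_cocycleE !transportVK LE_dist -distT.
- case: quandleT => _ _ idemT; rewrite /= fiber_cocycleE idemT LE_idem ?transportK //.
  by rewrite pi_transport ?pi_base_fiber.
Qed.

Lemma card_cover_le_of_fiber :
  sym_cohom_trivial op fiber_cocycle -> #|E| <= #|T|.
Proof.
case=> gam [_ gamP]; have b0_lift : pi (lift b0) == b0 by rewrite liftK.
pose sec y := transport y (val (gam y (Sub (lift b0) b0_lift))).
have LE_sec x y : LE x (sec y) = sec (op x y).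
  by rewrite /sec -(gamP x y) /= fiber_cocycleE transportVK.
have sec_onto e : exists y, e = sec y.
  elim: (connE (sec b0) e) => [|e' u _ [y ->]|e' u c _ [y e'_sec] uc].
  - by exists b0.
  - by exists (op (pi u) y); rewrite opE_lift LE_sec.
  - exists (opi (pi u) y); apply: (can_inj (opEK u)).
    by rewrite uc e'_sec (opE_lift u) LE_sec opiK.
have: #|E| <= size (codom sec).
  rewrite cardE; apply: uniq_leq_size => [|e _]; first exact: enum_uniq.
  by have [y ->] := sec_onto e; exact: codom_f.
by rewrite size_codom.
Qed.

End Cover.

Lemma card_connected_cover_le (E : finType) (opE : E -> E -> E) (pi : E -> T) :
  simply_connected op -> is_cover opE op pi -> qconnected opE -> #|E| <= #|T|.
Proof.
move=> [_ simplyT] coverE connE; case: (pickP E) => [e _|E0]; last by rewrite eq_card0.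
exact: (card_cover_le_of_fiber connE (simplyT _ _ (fiber_cocycle_sym coverE (pi e)))).
Qed.

Lemma no_connected_cover_gt N :
  simply_connected op -> #|T| < N -> ~ has_connected_cover op N.
Proof.
move=> simplyT T_lt_N [E [opE [pi [coverE connE cardE]]]].
by move: T_lt_N; rewrite -cardE ltnNge (card_connected_cover_le simplyT coverE connE).
Qed.

End CoversOfConnectedQuandles.

(** * Z_p-characters of abelian p-groups *)

Lemma Zp_intr_dvd p (k : int) : prime p -> (p%:Z %| k)%Z -> ((k%:~R : 'Z_p) = 0)%R.
Proof.
move=> p_pr /dvdzP [q ->]; rewrite intrM.
by rewrite [X in (_ * X)%R](_ : _ = p%:R)%R // pchar_Zp ?prime_gt1 // mulr0.
Qed.

Section ZpCharacters.
Variables (V : zmodType) (p : nat).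
Hypothesis p_pr : prime p.
Local Open Scope ring_scope.

Definition is_subgroup (H : V -> Prop) := H 0 /\ forall a b, H a -> H b -> H (a - b).

Lemma subgroupN H a : is_subgroup H -> H a -> H (- a).
Proof. by case=> H0 HB Ha; rewrite -sub0r; apply: HB. Qed.

Lemma subgroupD H a b : is_subgroup H -> H a -> H b -> H (a + b).
Proof. by move=> sH Ha Hb; rewrite -[b]opprK; apply: sH.2 => //; apply: subgroupN. Qed.

Lemma subgroupMz H a k : is_subgroup H -> H a -> H (a *~ k).
Proof.
move=> sH Ha; have HMn m : H (a *+ m).
  by elim: m => [|m IH]; rewrite ?mulr0n ?mulrS; [case: sH | apply: subgroupD].
case: k => m; first exact: HMn.
by rewrite NegzE mulrNz; apply: (subgroupN sH (HMn _)).
Qed.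

Definition addZ (H : V -> Prop) (g v : V) := exists k : int, H (v - g *~ k).

Lemma addZ_subgroup H g : is_subgroup H -> is_subgroup (addZ H g).
Proof.
move=> sH; split; first by exists 0; rewrite mulr0z subr0; case: sH.
move=> a b [ka Ha] [kb Hb]; exists (ka - kb).
have -> : a - b - g *~ (ka - kb) = (a - g *~ ka) - (b - g *~ kb).
  by rewrite mulrzBr !opprD addrACA.
exact: sH.2.
Qed.

Lemma addZ_sub H g v : H v -> addZ H g v.
Proof. by exists 0; rewrite mulr0z subr0. Qed.

Lemma addZ_gen H g : is_subgroup H -> addZ H g g.
Proof. by move=> sH; exists 1; rewrite mulr1z subrr; case: sH. Qed.

Lemma addZ_mono (H H' : V -> Prop) g v :
  (forall u, H u -> H' u) -> addZ H g v -> addZ H' g v.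
Proof. by move=> HH' [k Hk]; exists k; apply: HH'. Qed.

Lemma coprimez_of_ndvd (k : int) : ~~ (p%:Z %| k)%Z -> coprimez k p.
Proof. by move=> k_ndvd; rewrite coprimezE /= coprime_sym prime_coprime. Qed.

Section AvoidingSubgroup.
Variables (H : V -> Prop) (g0 : V).
Hypotheses (subH : is_subgroup H) (pV_H : forall v, H (v *+ p)) (g0_notin : ~ H g0).

Lemma dvdz_of_Mz_in k : H (g0 *~ k) -> (p%:Z %| k)%Z.
Proof.
move=> Hk; apply/negPn/negP => /coprimez_of_ndvd /coprimezP [[u v] /= uv].
apply: g0_notin; have -> : g0 = (g0 *~ k) *~ u + (g0 *~ v) *+ p.
  by rewrite pmulrn -!mulrzA -mulrzDr (mulrC k u) uv mulr1z.
by apply: subgroupD => //; apply: subgroupMz.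
Qed.

Lemma addZ_exchange g : addZ H g g0 -> addZ H g0 g.
Proof.
case=> k Hk; have : ~~ (p%:Z %| k)%Z.
  apply/negP => /dvdzP [q kq]; apply: g0_notin.
  have -> : g0 = (g0 - g *~ k) + (g *~ q) *+ p by rewrite kq mulrzA -pmulrn subrK.
  exact: subgroupD.
move=> /coprimez_of_ndvd /coprimezP [[u v] /= uv]; exists u.
have -> : g - g0 *~ u = (g *~ v) *+ p - (g0 - g *~ k) *~ u.
  rewrite pmulrn -mulrzA mulrzBl opprB -mulrzA addrA -mulrzDr.
  by rewrite [v * _ + _]addrC (mulrC k) uv mulr1z.
by apply: subH.2 => //; apply: subgroupMz.
Qed.

Lemma character_of_complement : (forall v, addZ H g0 v) ->
  exists2 chi : V -> 'Z_p, {morph chi : a b / a + b} & chi g0 != 0.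
Proof.
move=> full; pose m v := sval (cid (full v)).
have mP v : H (v - g0 *~ m v) := svalP (cid (full v)).
have m_unique v k : H (v - g0 *~ k) -> (m v)%:~R = k%:~R :> 'Z_p.
  move=> Hk; apply/eqP; rewrite -subr_eq0 -intrB; apply/eqP/Zp_intr_dvd/dvdz_of_Mz_in => //.
  by have := subH.2 _ _ Hk (mP v); rewrite opprB addrC addrA subrK -mulrzBr.
exists (fun v => (m v)%:~R) => [a b /=|].
  rewrite -intrD; apply: m_unique.
  by have := subgroupD subH (mP a) (mP b); rewrite mulrzDr opprD addrACA.
rewrite (m_unique g0 1) ?mulr1z ?oner_neq0 //.
by rewrite subrr; case: subH.
Qed.

End AvoidingSubgroup.

Lemma avoiding_subgroup (gs : seq V) g0 H :
  is_subgroup H -> (forall v, H (v *+ p)) -> ~ H g0 ->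
  exists H' : V -> Prop, [/\ is_subgroup H', (forall v, H v -> H' v), ~ H' g0 &
                             forall g, g \in gs -> addZ H' g0 g].
Proof.
elim: gs H => [|g gs IH] H subH pV_H g0_notin; first by exists H; split.
case: (pselect (addZ H g g0)) => [g0_in | g0_out].
  have [H' [subH' HH' g0H' gsH']] := IH H subH pV_H g0_notin.
  exists H'; split=> // g'; rewrite inE => /predU1P [->|]; last exact: gsH'.
  exact: addZ_mono HH' (addZ_exchange subH pV_H g0_notin g0_in).
have [H' [subH' HH' g0H' gsH']] :=
  IH (addZ H g) (addZ_subgroup g subH) (fun v => addZ_sub g (pV_H v)) g0_out.
exists H'; split=> [//|v Hv|//|g']; first exact/HH'/addZ_sub.
rewrite inE => /predU1P [->|]; last exact: gsH'.
exact/addZ_sub/HH'/addZ_gen.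
Qed.

Lemma trivial_of_Zp_characters (gs : seq V) K :
  (forall H, is_subgroup H -> (forall g, g \in gs -> H g) -> forall v, H v) ->
  (forall v : V, v *+ p ^ K = 0) ->
  (forall chi : V -> 'Z_p, {morph chi : a b / a + b} -> forall v, chi v = 0) ->
  forall v : V, v = 0.
Proof.
(* Either V = pV, and then V = p^K V = 0, or some g0 lies outside pV and a subgroup
   containing pV and maximal for avoiding g0 has index p. *)
move=> gen expK chi0; pose pV (v : V) := exists w, v = w *+ p.
have sub_pV : is_subgroup pV.
  split=> [|a b [wa ->] [wb ->]]; first by exists 0; rewrite mul0rn.
  by exists (wa - wb); rewrite mulrnBl.
case: (pselect (forall v, pV v)) => [all_pV v | /existsNP [g0 g0_notin]].
  have pjV j (w : V) : exists u, w = u *+ p ^ j.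
    elim: j w => [|j IH] w; first by exists w.
    have [u ->] := IH w; have [u' ->] := all_pV u.
    by exists u'; rewrite -mulrnA expnS mulnC.
  by have [u ->] := pjV K v; rewrite expK.
have [H [subH pV_H g0_notinH gsH]] :=
  avoiding_subgroup gs sub_pV (fun v => ex_intro _ v erefl) g0_notin.
have [chi chiD] := character_of_complement subH (fun v => pV_H _ (ex_intro _ v erefl))
                     g0_notinH (gen _ (addZ_subgroup g0 subH) gsH).
by rewrite chi0 ?eqxx.
Qed.

End ZpCharacters.

(** * The quandle Q(G,f) *)

Section PrincipalQuandle.
Variables (gT : finGroupType) (f : {perm gT}).
Hypothesis fAut : f \in Aut [set: gT].
Local Open Scope group_scope.
Local Notation op := (QGf f).

Lemma autM a b : f (a * b) = f a * f b.
Proof. by rewrite -(autmE fAut) morphM ?inE. Qed.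

Lemma aut1 : f 1 = 1.
Proof. by rewrite -(autmE fAut) morph1. Qed.

Lemma autV a : f a^-1 = (f a)^-1.
Proof. by rewrite -(autmE fAut) morphV ?inE. Qed.

Lemma autVM a b : f^-1 (a * b) = f^-1 a * f^-1 b.
Proof. by apply: (can_inj (permK f)); rewrite autM !permKV. Qed.

Definition QGfV (x z : gT) : gT := x * f^-1 (x^-1 * z).

Lemma QGfK x : cancel (op x) (QGfV x).
Proof. by move=> y; rewrite /QGf /QGfV mulKg permK mulKVg. Qed.

Lemma QGfVK x : cancel (QGfV x) (op x).
Proof. by move=> y; rewrite /QGf /QGfV mulKg permKV mulKVg. Qed.

Lemma QGf_quandle : is_quandle op.
Proof.
split=> [x|x y z|x]; first by exists (QGfV x); [apply: QGfK | apply: QGfVK].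
  by rewrite /QGf !autM !autV ?autM ?autV !invMg ?invgK -!mulgA ?mulKg ?mulKVg.
by rewrite /QGf mulVg aut1 mulg1.
Qed.

Lemma QGf_lmul g x y : g * op x y = op (g * x) (g * y).
Proof. by rewrite /QGf invMg -!mulgA mulKg. Qed.

Local Notation qact := (wact op QGfV).

Lemma qact_affine w : exists h k, forall y, qact w y = h * (f ^+ k) y.
Proof.
elim: w => [|[x []] w [h [k IH]]] /=.
- by exists 1, 0 => y; rewrite mul1g expg0 perm1.
- exists (x * f (x^-1 * h)), k.+1 => y.
  by rewrite IH /QGf mulgA autM expgSr permM mulgA.
- exists (x * f^-1 (x^-1 * h)), (k + #[f].-1) => y.
  by rewrite IH /QGfV mulgA autVM mulgA expgD permM -invg_expg.
Qed.

(* The letter [(1, false)] acts as [f^-1]. *)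
Lemma qact_lmul w : exists k, forall y, qact (w ++ nseq k (1, false)) y = qact w 1 * y.
Proof.
have [h [k wE]] := qact_affine w; exists k => y.
have fk1 j : (f ^+ j) 1 = 1.
  by elim: j => [|j IH]; rewrite ?expg0 ?perm1 // expgSr permM IH aut1.
rewrite wact_cat !wE fk1 mulg1; congr (_ * _).
elim: k {wE} y => [|k IH] y /=; first by rewrite expg0 perm1.
by rewrite expgS permM /QGfV invg1 !mul1g -(IH y) permKV.
Qed.

Section AdditiveAlongQGf.
Variables (A : zmodType) (psi : gT -> A).
Hypotheses (connG : qconnected op) (psi1 : psi 1 = 0%R).
Hypothesis psi_QGf : forall y w, (psi (f w) + psi (y * w)%g = psi (y * f w)%g + psi w)%R.
Local Open Scope ring_scope.

Let additive_at h := forall t, psi (t * h)%g = psi t + psi h.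

Let additive_at1 : additive_at 1.
Proof. by move=> t; rewrite mulg1 psi1 addr0. Qed.

Let additive_atM a b : additive_at a -> additive_at b -> additive_at (a * b)%g.
Proof. by move=> Ha Hb t; rewrite mulgA (Hb (t * a)%g) Ha (Hb a) addrA. Qed.

Let additive_atV a : additive_at a -> additive_at a^-1%g.
Proof.
move=> Ha; have psi_divr t : psi (t * a^-1)%g = psi t - psi a.
  by apply: (addIr (psi a)); rewrite -Ha mulgKV subrK.
by move=> t; rewrite !psi_divr -(mul1g a^-1%g) psi_divr psi1 sub0r.
Qed.

Let additive_at_f h : additive_at h -> additive_at (f h).
Proof.
move=> Hh t; apply: (addIr (psi h)).
by rewrite -psi_QGf Hh addrCA addrA.
Qed.

Let additive_at_fV h : additive_at (f h) -> additive_at h.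
Proof.
move=> Hfh t; apply: (addrI (psi (f h))).
by rewrite psi_QGf Hfh addrCA addrA.
Qed.

Let additive_at_displacement w : additive_at (w^-1 * f w)%g.
Proof.
have psi_disp t : psi (t * (w^-1 * f w))%g = psi (f w) + psi t - psi w.
  by have := psi_QGf (t * w^-1)%g w; rewrite mulgKV -!mulgA => ->; rewrite addrK.
by move=> t; rewrite !psi_disp -(mul1g (w^-1 * f w)%g) psi_disp psi1 addr0 addrCA addrA.
Qed.

Lemma morph_of_QGf_identity : {morph psi : a b / (a * b)%g >-> a + b}.
Proof.
suff all_additive y : additive_at y by move=> a b; apply: all_additive.
elim: (connG 1%g y) => [|b x _ Hb|b x c _ Hb xcb]; first exact: additive_at1.
  have -> : op x b = (((x^-1)^-1 * f x^-1) * f b)%g by rewrite /QGf autM mulgA invgK.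
  exact: additive_atM (additive_at_displacement _) (additive_at_f Hb).
apply: additive_at_fV; have -> : f c = (((x^-1)^-1 * f x^-1)^-1 * b)%g.
  by rewrite -xcb /QGf autM invgK (mulgA x) mulKg.
exact: additive_atM (additive_atV (additive_at_displacement _)) Hb.
Qed.

End AdditiveAlongQGf.

End PrincipalQuandle.

(** * Monodromy of extensions of Q(G,f) *)

Section Monodromy.
Variables (gT : finGroupType) (f : {perm gT}).
Hypotheses (fAut : f \in Aut [set: gT]) (connG : qconnected (QGf f)).
Variables (S : Type) (bt : gT -> gT -> S -> S).
Hypothesis cocycle_bt : sym_cocycle (QGf f) bt.
Variable s0 : S.

Local Notation op := (QGf f).
Local Notation opi := (QGfV f).
Local Notation qact := (wact op opi).
Local Notation L := (ext_act op bt).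
Local Notation LV := (ext_actV opi cocycle_bt).
Local Notation eact := (wact L LV).
Local Notation trivial_word := (trivial_word op opi).

Let quandleG := QGf_quandle fAut.
Let opK := @QGfK gT f.
Let opiK := @QGfVK gT f.
Let LK := ext_actK opK cocycle_bt.
Let LVK := ext_actVK opiK cocycle_bt.

Definition e0 : gT * S := (1%g, s0).
Definition reachable (c : gT * S) := exists w, eact w e0 = c.

Lemma reachable_eact w c : reachable c -> reachable (eact w c).
Proof. by case=> h <-; exists (w ++ h); rewrite wact_cat. Qed.

Lemma reachable_e0 : reachable e0. Proof. by exists [::]. Qed.

Lemma reachable_L x c : reachable c -> reachable (L x c).
Proof. exact: (reachable_eact [:: (x, true)]). Qed.

Lemma reachable_LV x c : reachable c -> reachable (LV x c).
Proof. exact: (reachable_eact [:: (x, false)]). Qed.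

Lemma reachable_invariant (A : Type) (Phi : gT * S -> A) :
  (forall x c, reachable c -> Phi (L x c) = Phi c) -> forall w, Phi (eact w e0) = Phi e0.
Proof.
move=> PhiL; elim=> [|[x []] w IH] //=; rewrite -IH.
  exact/PhiL/reachable_eact/reachable_e0.
by rewrite -[in RHS](LVK x (eact w e0)) PhiL //; apply/reachable_LV/reachable_eact/reachable_e0.
Qed.

Lemma loop_trivial_word w :
  qact w 1%g = 1%g -> exists2 t, trivial_word t & eact t e0 = eact w e0.
Proof.
move=> loop_w; have [k wk] := qact_lmul fAut w.
exists (w ++ nseq k (1%g, false)) => [y|]; first by rewrite wk loop_w mul1g.
rewrite wact_cat wact_nseqV //.
by rewrite /e0 -{1}(ext_act_idem quandleG cocycle_bt 1%g s0) LK.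
Qed.

Definition fiber1 := {s : S | reachable (1%g, s)}.
HB.instance Definition _ := gen_eqMixin fiber1.
HB.instance Definition _ := gen_choiceMixin fiber1.

Definition point (a : fiber1) : gT * S := (1%g, sval a).

Lemma point_inj : injective point.
Proof.
by move=> [a ra] [b rb] /= [ab]; move: ra rb; rewrite ab => ra rb; rewrite (Prop_irrelevance ra rb).
Qed.

Lemma eact_loop w : qact w 1%g = 1%g -> eact w e0 = (1%g, (eact w e0).2).
Proof. by move=> loop_w; rewrite [LHS]surjective_pairing (eact_fst opK opiK) loop_w. Qed.

Definition loop_point w (loop_w : qact w 1%g = 1%g) : fiber1 :=
  exist _ (eact w e0).2 (ex_intro _ w (eact_loop loop_w)).

Lemma point_loop_point w loop_w : point (@loop_point w loop_w) = eact w e0.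
Proof. by rewrite /point /= -eact_loop. Qed.

Lemma deck_word_spec (a : fiber1) : exists t, trivial_word t /\ eact t e0 = point a.
Proof.
case: a => s [w ws]; have loop_w : qact w 1%g = 1%g.
  by have := congr1 fst ws; rewrite (eact_fst opK opiK).
by have [t triv_t tw] := loop_trivial_word loop_w; exists t; rewrite tw ws.
Qed.

Definition deck_word (a : fiber1) := sval (cid (deck_word_spec a)).
Lemma deck_word_trivial a : trivial_word (deck_word a).
Proof. exact: (svalP (cid (deck_word_spec a))).1. Qed.
Lemma deck_word_e0 a : eact (deck_word a) e0 = point a.
Proof. exact: (svalP (cid (deck_word_spec a))).2. Qed.

Definition deck (a : fiber1) := eact (deck_word a).

Lemma deckC a b e : deck a (deck b e) = deck b (deck a e).
Proof. exact: (trivial_word_comm quandleG opK opiK _ _ _ (deck_word_trivial a)). Qed.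

Lemma deck_eact a w e : deck a (eact w e) = eact w (deck a e).
Proof. exact: (trivial_word_comm quandleG opK opiK _ _ _ (deck_word_trivial a)). Qed.

Lemma deck_e0 a w : deck a (eact w e0) = eact w (point a).
Proof. by rewrite deck_eact /deck deck_word_e0. Qed.

Let loop_trivial w : trivial_word w -> qact w 1%g = 1%g. Proof. by apply. Qed.

Definition fiber_zero : fiber1 := @loop_point [::] erefl.
Definition fiber_add (a b : fiber1) : fiber1 :=
  loop_point (loop_trivial (trivial_word_cat (deck_word_trivial a) (deck_word_trivial b))).
Definition fiber_opp (a : fiber1) : fiber1 :=
  loop_point (loop_trivial (trivial_word_inv opK opiK (deck_word_trivial a))).

Lemma point_zero : point fiber_zero = e0. Proof. by rewrite point_loop_point. Qed.
Lemma point_add a b : point (fiber_add a b) = deck a (point b).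
Proof. by rewrite point_loop_point wact_cat deck_word_e0. Qed.

Lemma reachable_point a : reachable (point a).
Proof. by exists (deck_word a); rewrite deck_word_e0. Qed.

Lemma deck_add a b e : reachable e -> deck (fiber_add a b) e = deck a (deck b e).
Proof. by case=> h <-; rewrite !deck_e0 point_add deck_eact. Qed.

Lemma fiber_addA : associative fiber_add.
Proof.
by move=> a b c; apply: point_inj; rewrite !point_add deck_add //; exact: reachable_point.
Qed.

Lemma fiber_addC : commutative fiber_add.
Proof.
move=> a b; apply: point_inj; rewrite !point_add -(deck_word_e0 a) -(deck_word_e0 b).
exact: deckC.
Qed.

Lemma fiber_add0 : left_id fiber_zero fiber_add.
Proof.
move=> a; apply: point_inj; rewrite point_add -(deck_word_e0 a) deck_eact.
by rewrite /deck deck_word_e0 point_zero.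
Qed.

Lemma fiber_addN : left_inverse fiber_zero fiber_opp fiber_add.
Proof.
move=> a; apply: point_inj; rewrite point_add point_zero -(deck_word_e0 a) deck_eact.
by rewrite /deck deck_word_e0 point_loop_point wactVK.
Qed.

HB.instance Definition _ :=
  GRing.isZmodule.Build fiber1 fiber_addA fiber_addC fiber_add0 fiber_addN.

Local Open Scope ring_scope.

Lemma deck_fst a e : (deck a e).1 = e.1.
Proof. by rewrite (eact_fst opK opiK) deck_word_trivial. Qed.

Lemma deck_L a x e : deck a (L x e) = L x (deck a e).
Proof. by rewrite /deck (eact_ext_act quandleG opK opiK) deck_word_trivial. Qed.

Lemma deck_inj c : reachable c -> injective (deck^~ c).
Proof. by case=> h <- a b /=; rewrite !deck_e0 => /(wact_inj LK LVK); apply: point_inj. Qed.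

Lemma deck0 c : reachable c -> deck 0 c = c.
Proof. by case=> h <-; rewrite deck_e0 point_zero. Qed.

Local Notation path := (path_to opK connG 1%g).

Definition ref_point (y : gT) : gT * S := eact (path y) e0.

Lemma ref_point_fst y : (ref_point y).1 = y.
Proof. by rewrite (eact_fst opK opiK) path_toP. Qed.

Lemma reachable_ref_point y : reachable (ref_point y). Proof. by exists (path y). Qed.

Lemma coord_spec c : reachable c -> exists a, deck a (ref_point c.1) = c.
Proof.
case=> h hc; have hy : qact h 1%g = c.1 by rewrite -hc (eact_fst opK opiK).
have loop_u : qact (winv (path c.1) ++ h) 1%g = 1%g by rewrite wact_cat hy path_toVP.
exists (loop_point loop_u).
by rewrite /ref_point deck_e0 point_loop_point wact_cat hc (wactVK LK LVK).
Qed.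

(* Junk value [0] unless [c] is reachable. *)
Definition coord (c : gT * S) : fiber1 :=
  if pselect (exists a, deck a (ref_point c.1) = c) is left ex then sval (cid ex) else 0.

Lemma coordK c : reachable c -> deck (coord c) (ref_point c.1) = c.
Proof.
move=> rc; rewrite /coord; case: pselect => [ex|]; first exact: svalP (cid ex).
by move/(_ (coord_spec rc)).
Qed.

Lemma coord_deck a y : coord (deck a (ref_point y)) = a.
Proof.
apply: (deck_inj (reachable_ref_point y)) => /=.
by rewrite -{2}(ref_point_fst y) -(deck_fst a) coordK //; apply/reachable_eact/reachable_ref_point.
Qed.

Lemma coord_deckD a c : reachable c -> coord (deck a c) = a + coord c.
Proof.
move=> rc; rewrite -{1}(coordK rc) -deck_add ?coord_deck //; exact: reachable_ref_point.
Qed.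

Definition nu x y := coord (L x (ref_point y)).

Lemma coord_L x c : reachable c -> coord (L x c) = coord c + nu x c.1.
Proof.
move=> rc; have := coordK (reachable_L x (reachable_ref_point c.1)); rewrite /= ref_point_fst => Lb.
by rewrite -{1}(coordK rc) -deck_L -Lb -deck_add ?coord_deck //; exact: reachable_ref_point.
Qed.

Lemma coord_LV x c : reachable c -> coord (LV x c) = coord c - nu x (LV x c).1.
Proof.
move=> rc; rewrite -{2}(LVK x c) coord_L ?addrK //; exact: reachable_LV.
Qed.

Lemma nu_cocycle : ab_cocycle op nu.
Proof.
split=> [x y z|x].
  have := coord_L x (reachable_L y (reachable_ref_point z)).
  rewrite (ext_act_dist quandleG cocycle_bt) coord_L; last exact/reachable_L/reachable_ref_point.
  by rewrite /= !ref_point_fst -/(nu x z) -/(nu y z) => nu_xyz; rewrite addrC nu_xyz addrC.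
rewrite /nu; have bx : ref_point x = (x, (ref_point x).2).
  by rewrite [LHS]surjective_pairing ref_point_fst.
by rewrite bx (ext_act_idem quandleG cocycle_bt) -bx -{1}(deck0 (reachable_ref_point x)) coord_deck.
Qed.

Lemma fiber1_generated (H : fiber1 -> Prop) :
  is_subgroup H -> (forall x y, H (nu x y)) -> forall a, H a.
Proof.
move=> subH Hnu a; have Hw w : H (coord (eact w e0) - coord e0).
  elim: w => [|[x []] w IH] /=; first by rewrite subrr; case: subH.
    rewrite coord_L; last exact/reachable_eact/reachable_e0.
    by rewrite addrAC; apply: subgroupD subH IH (Hnu _ _).
  rewrite coord_LV; last exact/reachable_eact/reachable_e0.
  by rewrite addrAC; apply: subH.2 IH (Hnu _ _).
by have := Hw (deck_word a); rewrite -/(deck a e0) coord_deckD ?addrK //; apply: reachable_e0.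
Qed.

Definition lmul_word (g : gT) : seq (gT * bool) :=
  path g ++ nseq (sval (cid (qact_lmul fAut (path g)))) (1%g, false).

Lemma lmul_wordP g y : qact (lmul_word g) y = (g * y)%g.
Proof. by rewrite /lmul_word (svalP (cid (qact_lmul fAut (path g)))) path_toP. Qed.

Definition coord_sum (c : gT * S) : fiber1 := \sum_(g : gT) coord (eact (lmul_word g) c).
Definition nu_sum (x y : gT) : fiber1 := \sum_(g : gT) nu (g * x)%g (g * y)%g.

Lemma coord_sum_L x c : reachable c -> coord_sum (L x c) = coord_sum c + nu_sum x c.1.
Proof.
move=> rc; rewrite /coord_sum /nu_sum -big_split; apply: eq_bigr => g _ /=.
rewrite (eact_ext_act quandleG opK opiK) lmul_wordP coord_L; last exact: reachable_eact.
by rewrite (eact_fst opK opiK) lmul_wordP.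
Qed.

Lemma coord_sum_deck a c : reachable c -> coord_sum (deck a c) = coord_sum c + a *+ #|gT|.
Proof.
move=> rc; rewrite /coord_sum addrC -sumr_const -big_split; apply: eq_bigr => g _ /=.
by rewrite -deck_eact coord_deckD //; apply: reachable_eact.
Qed.

Lemma nu_sum_lmul h x y : nu_sum (h * x)%g (h * y)%g = nu_sum x y.
Proof.
by rewrite /nu_sum [RHS](reindex_inj (mulIg h)); apply: eq_bigr => g _; rewrite !mulgA.
Qed.

Lemma nu_sum_cocycle : ab_cocycle op nu_sum.
Proof.
case: nu_cocycle => nu_coc nu_id; split=> [x y z|x].
  by rewrite /nu_sum -!big_split; apply: eq_bigr => g _ /=; rewrite !QGf_lmul nu_coc.
by rewrite /nu_sum big1 // => g _; rewrite nu_id.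
Qed.

Lemma nu_sum_exp x y : nu_sum x y *+ #|gT| = 0.
Proof.
case: nu_sum_cocycle => nu_coc nu_id; pose psi w := nu_sum 1%g w.
have nu_psi u v : nu_sum u v = psi (u^-1 * v)%g by rewrite /psi -(nu_sum_lmul u^-1) mulVg.
have psiM : {morph psi : a b / (a * b)%g >-> a + b}.
  apply: (morph_of_QGf_identity fAut connG); first exact: nu_id.
  move=> u w; have := nu_coc 1%g u (u * w)%g; rewrite !nu_psi.
  by rewrite /QGf !invg1 !mul1g !mulKg autM // mulKg.
have psiX a k : psi (a ^+ k)%g = psi a *+ k.
  elim: k => [|k IH]; first by rewrite expg0 mulr0n; apply: nu_id.
  by rewrite expgS psiM IH mulrS.
rewrite nu_psi -psiX -cardsT expg_cardG ?inE //; exact: nu_id.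
Qed.

Lemma fiber1_exp (a : fiber1) : a *+ (#|gT| * #|gT|) = 0.
Proof.
pose inv c := coord_sum c *+ #|gT|.
have inv_L x c : reachable c -> inv (L x c) = inv c.
  by move=> rc; rewrite /inv coord_sum_L // mulrnDl nu_sum_exp addr0.
have := reachable_invariant inv_L (deck_word a); rewrite -/(deck a e0) /inv.
rewrite coord_sum_deck; last exact: reachable_e0.
by rewrite mulrnDl mulrnA => /eqP; rewrite addrC -subr_eq0 addrK => /eqP.
Qed.

Lemma Zp_characters_fiber1 p : H2_Zp_trivial op p ->
  forall chi : fiber1 -> 'Z_p, {morph chi : a b / a + b} -> forall a, chi a = 0.
Proof.
move=> H2triv chi chiD a; have chi0 : chi 0 = 0.
  by apply: (addIr (chi 0)); rewrite -chiD !add0r.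
have [gam gamP] : exists gam : gT -> 'Z_p, forall x y, chi (nu x y) = gam (op x y) - gam y.
  apply: (H2triv (fun x y => chi (nu x y))); case: nu_cocycle => nu_coc nu_id.
  by split=> [x y z|x]; rewrite ?nu_id // -!chiD nu_coc.
pose inv c := chi (coord c) - gam c.1.
have inv_L x c : reachable c -> inv (L x c) = inv c.
  by move=> rc; rewrite /inv coord_L // chiD gamP /= addrA addrAC addrK.
have := reachable_invariant inv_L (deck_word a); rewrite -/(deck a e0) /inv.
rewrite coord_deckD ?deck_fst ?chiD; last exact: reachable_e0.
by move/eqP; rewrite -addrA -subr_eq0 addrK => /eqP.
Qed.

Lemma monodromy_trivial p n :
  prime p -> #|gT| = (p ^ n)%N -> H2_Zp_trivial op p ->
  forall w, qact w 1%g = 1%g -> eact w e0 = e0.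
Proof.
move=> p_pr cardG H2triv w loop_w; rewrite -(point_loop_point loop_w).
suff -> : loop_point loop_w = 0 by rewrite point_zero.
apply: (trivial_of_Zp_characters p_pr (gs := codom (fun xy : gT * gT => nu xy.1 xy.2))
          (K := n + n)).
- move=> H subH gsH; apply: (fiber1_generated subH) => x y.
  exact: gsH (codom_f (fun xy : gT * gT => nu xy.1 xy.2) (x, y)).
- by move=> a; rewrite expnD -cardG fiber1_exp.
- exact: Zp_characters_fiber1.
Qed.

End Monodromy.

Lemma QGf_simply_connected_of_H2 p n (gT : finGroupType) (f : {perm gT}) :
  prime p -> #|gT| = p ^ n -> f \in Aut [set: gT] -> qconnected (QGf f) ->
  H2_Zp_trivial (QGf f) p -> simply_connected (QGf f).
Proof.
move=> p_pr cardG fAut connG H2triv; split=> // S bt cocycle_bt.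
apply: (sym_cohom_trivial_of_monodromy (@QGfK _ f) (@QGfVK _ f) connG (b0 := 1%g)).
by move=> w s; apply: (monodromy_trivial fAut connG cocycle_bt s p_pr cardG H2triv).
Qed.

Theorem theorem3p12 (p n : nat) (gT : finGroupType) (f : {perm gT}) :
  prime p ->
  #|gT| = p ^ n ->
  f \in Aut [set: gT] ->
  qconnected (QGf f) ->
  [<-> simply_connected (QGf f);
       forall th : gT -> gT -> 'Z_p,
         ab_cocycle (QGf f) th -> ab_cohom_trivial (QGf f) th;
       ~ exists (E : finType) (opE : E -> E -> E) (pi : E -> gT),
           [/\ is_cover opE (QGf f) pi, qconnected opE & #|E| = p ^ n.+1]].
Proof.
move=> p_pr cardG fAut connG.
have [quandleG opK opiK] := And3 (QGf_quandle fAut) (@QGfK gT f) (@QGfVK gT f).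
have ii_i := QGf_simply_connected_of_H2 p_pr cardG fAut connG.
have i_iii (simplyG : simply_connected (QGf f)) : ~ has_connected_cover (QGf f) (p ^ n.+1).
  apply: (no_connected_cover_gt quandleG opK opiK connG simplyG).
  by rewrite cardG ltn_exp2l ?prime_gt1.
have iii_ii : ~ has_connected_cover (QGf f) (p ^ n.+1) -> H2_Zp_trivial (QGf f) p.
  move=> no_cover th cocycle_th; apply: contrapT => nontriv; apply: no_cover.
  rewrite expnSr -cardG.
  exact: (Zp_connected_cover quandleG opK opiK connG p_pr cocycle_th nontriv).
tfae=> [[_ simplyG] th cocycle_th|/ii_i/i_iii //|/iii_ii/ii_i //].
exact/ab_cohom_trivial_of_sym/simplyG/sym_of_ab_cocycle.
Qed.
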